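(* The morphism $\tau$ restricts to an isomorphism $\tau:U_\tau\xrightarrow{\sim}U_\rho$, one has $U_\rho\subseteq\bar M\setminus T_\rho$, and $\rho$ restricts to an isomorphism $\rho:U_\rho\xrightarrow{\sim}U_\tau$ with $\tau|_{U_\tau}=(\rho|_{U_\rho})^{-1}$.
   Context: Work over $\mathbb Q$. Let $\sigma_k$ be the $k$-th elementary symmetric polynomial in $x_0,\dots,x_4$ and $\bar M\subset\mathbb P^4$ the surface $\sigma_2=\sigma_4=0$. Let $t_0=(y-z)(xy+xz-z^2)$, $t_1=xz^2+yz^2-x^2y-z^3$, $t_2=x(z^2-y^2-xz)$, $t_3=z(yz-xz+x^2-y^2)$, $\tau_i=-(\prod_{j\in\{0,..,3\},j\neq i}t_j)(\sum_{j=0}^3t_j)$ ($i\le3$), $\tau_4=\prod_{j=0}^3t_j$, $T_\tau=\bigcap_iV_+(\tau_i)\subset\mathbb P^2$ (finite); $\tau=(\tau_0:\dots:\tau_4)$ defines a morphism $\mathbb P^2\setminus T_\tau\to\bar M$ (its scheme-theoretic image is $\bar M$). With $r_i=\prod_{j\in\{0,..,4\},j\neq i}x_j$, set $\rho_0=-(r_1+r_3)(r_0+r_1+r_2)$, $\rho_1=r_0(r_0+r_1+r_2+r_3)$, $\rho_2=r_0(r_0+r_2)$, $T_\rho=\bar M\cap\bigcap_{i}V_+(\rho_i)$, and $\rho=(\rho_0:\rho_1:\rho_2):\bar M\setminus T_\rho\to\mathbb P^2$. Let $\lambda=\rho_0(\tau_0,\dots,\tau_4)/x\in\mathbb Z[x,y,z]$,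 $C_\tau=V_+(\lambda)$, $U_\tau=\mathbb P^2\setminus C_\tau$ and $U_\rho=\tau(U_\tau)\subset\bar M$. *)

From HB Require Import structures.
From mathcomp Require Import all_boot all_order all_algebra.
From mathcomp Require Import mpoly.
Set Implicit Arguments. Unset Strict Implicit. Unset Printing Implicit Defensive.
Import Order.TTheory GRing.Theory Num.Theory.
Local Open Scope ring_scope.

(* Polynomials with integer coefficients; P^2 has coordinates x,y,z = X_0,X_1,X_2,
   P^4 has coordinates x_0..x_4 = X_0..X_4. *)
Definition px : {mpoly int[3]} := 'X_0.
Definition py : {mpoly int[3]} := 'X_1.
Definition pz : {mpoly int[3]} := 'X_2.

Definition tpol (j : nat) : {mpoly int[3]} :=
  match j with
  | 0 => (py - pz) * (px * py + px * pz - pz ^+ 2)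
  | 1 => px * pz ^+ 2 + py * pz ^+ 2 - px ^+ 2 * py - pz ^+ 3
  | 2 => px * (pz ^+ 2 - py ^+ 2 - px * pz)
  | _ => pz * (py * pz - px * pz + px ^+ 2 - py ^+ 2)
  end.

Definition taupol (i : 'I_5) : {mpoly int[3]} :=
  if (i < 4)%N then
    - (\prod_(j < 4 | (j : nat) != (i : nat)) tpol j) * (\sum_(j < 4) tpol j)
  else \prod_(j < 4) tpol j.

Definition sigmapol (k : nat) : {mpoly int[5]} := mesym 5 int k.

Definition rpol (i : nat) : {mpoly int[5]} :=
  \prod_(j < 5 | (j : nat) != i) 'X_j.

Definition rhopol (i : 'I_3) : {mpoly int[5]} :=
  match (i : nat) with
  | 0 => - (rpol 1 + rpol 3) * (rpol 0 + rpol 1 + rpol 2)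
  | 1 => rpol 0 * (rpol 0 + rpol 1 + rpol 2 + rpol 3)
  | _ => rpol 0 * (rpol 0 + rpol 2)
  end.

Definition rho0_tau : {mpoly int[3]} :=
  comp_mpoly [tuple taupol i | i < 5] (rhopol 0).

(* Exact division by x of a polynomial divisible by x: shift exponents of x down *)
Definition divX0 (P : {mpoly int[3]}) : {mpoly int[3]} :=
  \sum_(m <- msupp P | (0 < m (@ord0 2))%N) P@_m *: 'X_[(m - U_(@ord0 2))%MM].

Definition lampol : {mpoly int[3]} := divX0 rho0_tau.

Section Points.
Variable K : fieldType.

Definition ev (n : nat) (P : {mpoly int[n]}) (v : 'I_n -> K) : K :=
  (map_mpoly (fun c : int => c%:~R) P).@[v].

Definition nonzero_vec (n : nat) (v : 'I_n -> K) : Prop := exists i, v i != 0.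

Definition proj_eq (n : nat) (v w : 'I_n -> K) : Prop :=
  exists c : K, c != 0 /\ forall i, w i = c * v i.

Definition tau_map (p : 'I_3 -> K) : 'I_5 -> K := fun i => ev (taupol i) p.
Definition rho_map (q : 'I_5 -> K) : 'I_3 -> K := fun i => ev (rhopol i) q.

Definition notin_Ttau (p : 'I_3 -> K) : Prop := nonzero_vec (tau_map p).

Definition in_Mbar (q : 'I_5 -> K) : Prop :=
  nonzero_vec q /\ ev (sigmapol 2) q = 0 /\ ev (sigmapol 4) q = 0.

Definition in_Mbar_minus_Trho (q : 'I_5 -> K) : Prop :=
  in_Mbar q /\ nonzero_vec (rho_map q).

Definition in_Utau (p : 'I_3 -> K) : Prop := nonzero_vec p /\ ev lampol p != 0.

Definition in_Urho (q : 'I_5 -> K) : Prop :=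
  exists p, in_Utau p /\ proj_eq (tau_map p) q.

End Points.

From HB Require Import structures.
From mathcomp Require Import all_boot all_order all_algebra.
From mathcomp Require Import mpoly ring.
Import GRing.Theory.
Local Open Scope ring_scope.
Set Implicit Arguments. Unset Strict Implicit. Unset Printing Implicit Defensive.

(** Write τ through the cubics t_0, .., t_3.  Each cofactor r_i(τ), i ≤ 3, equals
    u·t_i with u = -(Σ t)^3 (Π t)^3, so ρ(τ) = u^2·ρ_t(t); and ρ_t(t(x,y,z)) = g·(x,y,z)
    for an explicit quintic g.  Hence ρ∘τ = λ·id with λ = u^2 g, which is indeed
    ρ_0(τ)/x.  Moreover σ_4(τ) vanishes identically and σ_2(τ) is a multiple of
    (Σ t) e_2(t) - e_3(t), which vanishes on the t_j.  As τ_4 = Π t divides λ, τ is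
    defined on U_τ, lands in M̄, and ρ∘τ = id there.  A point of U_ρ is c·τ(p); by
    homogeneity (τ, ρ, λ have degrees 12, 8, 95) ρ sends it to c^8 λ(p)·p ∈ U_τ, which
    τ maps back to a nonzero multiple of c·τ(p).  All identities hold over ℤ. *)

Section Formulas.
Variable R : comPzRingType.

Definition t_xyz (x y z : R) (j : nat) : R :=
  match j with
  | 0 => (y - z) * (x * y + x * z - z ^+ 2)
  | 1 => x * z ^+ 2 + y * z ^+ 2 - x ^+ 2 * y - z ^+ 3
  | 2 => x * (z ^+ 2 - y ^+ 2 - x * z)
  | _ => z * (y * z - x * z + x ^+ 2 - y ^+ 2)
  end.

Definition tau_t (t0 t1 t2 t3 : R) (i : nat) : R :=
  match i with
  | 0 => - (t1 * t2 * t3) * (t0 + t1 + t2 + t3)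
  | 1 => - (t0 * t2 * t3) * (t0 + t1 + t2 + t3)
  | 2 => - (t0 * t1 * t3) * (t0 + t1 + t2 + t3)
  | 3 => - (t0 * t1 * t2) * (t0 + t1 + t2 + t3)
  | _ => t0 * t1 * t2 * t3
  end.

Definition tau_xyz (x y z : R) : nat -> R :=
  tau_t (t_xyz x y z 0) (t_xyz x y z 1) (t_xyz x y z 2) (t_xyz x y z 3).

Definition r_q (q : nat -> R) (i : nat) : R :=
  match i with
  | 0 => q 1%N * q 2%N * q 3%N * q 4%N
  | 1 => q 0%N * q 2%N * q 3%N * q 4%N
  | 2 => q 0%N * q 1%N * q 3%N * q 4%N
  | 3 => q 0%N * q 1%N * q 2%N * q 4%N
  | _ => q 0%N * q 1%N * q 2%N * q 3%N
  end.

Definition rho_q (q : nat -> R) (i : nat) : R :=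
  match i with
  | 0 => - (r_q q 1%N + r_q q 3%N) * (r_q q 0%N + r_q q 1%N + r_q q 2%N)
  | 1 => r_q q 0%N * (r_q q 0%N + r_q q 1%N + r_q q 2%N + r_q q 3%N)
  | _ => r_q q 0%N * (r_q q 0%N + r_q q 2%N)
  end.

Definition rho_t (t0 t1 t2 t3 : R) (i : nat) : R :=
  match i with
  | 0 => - (t1 + t3) * (t0 + t1 + t2)
  | 1 => t0 * (t0 + t1 + t2 + t3)
  | _ => t0 * (t0 + t2)
  end.

Definition sigma2_q (q : nat -> R) : R :=
  q 0%N * q 1%N + q 0%N * q 2%N + q 0%N * q 3%N + q 0%N * q 4%N + q 1%N * q 2%N
  + q 1%N * q 3%N + q 1%N * q 4%N + q 2%N * q 3%N + q 2%N * q 4%N + q 3%N * q 4%N.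

Definition sigma4_q (q : nat -> R) : R :=
  q 0%N * q 1%N * q 2%N * q 3%N + q 0%N * q 1%N * q 2%N * q 4%N + q 0%N * q 1%N * q 3%N * q 4%N
  + q 0%N * q 2%N * q 3%N * q 4%N + q 1%N * q 2%N * q 3%N * q 4%N.

Definition u_t (t0 t1 t2 t3 : R) : R :=
  - ((t0 + t1 + t2 + t3) ^+ 3 * (t0 * t1 * t2 * t3) ^+ 3).

Definition g_xyz (x y z : R) : R :=
  - 2 * y * z ^+ 4 + x * y ^+ 2 * z ^+ 2 + x * y * z ^+ 3 + x ^+ 2 * y * z ^+ 2
  - x ^+ 3 * y ^+ 2 + z ^+ 5 - x * z ^+ 4 - x ^+ 2 * z ^+ 3 + x ^+ 3 * z ^+ 2
  + y ^+ 2 * z ^+ 3 - x * y ^+ 3 * z.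

Definition lambda_xyz (x y z : R) : R :=
  u_t (t_xyz x y z 0) (t_xyz x y z 1) (t_xyz x y z 2) (t_xyz x y z 3) ^+ 2
  * g_xyz x y z.

Lemma rho_tau_t (t0 t1 t2 t3 : R) (i : nat) :
  rho_q (tau_t t0 t1 t2 t3) i = u_t t0 t1 t2 t3 ^+ 2 * rho_t t0 t1 t2 t3 i.
Proof.
have [r0 r1 r2 r3] : [/\ r_q (tau_t t0 t1 t2 t3) 0 = u_t t0 t1 t2 t3 * t0,
    r_q (tau_t t0 t1 t2 t3) 1 = u_t t0 t1 t2 t3 * t1,
    r_q (tau_t t0 t1 t2 t3) 2 = u_t t0 t1 t2 t3 * t2 &
    r_q (tau_t t0 t1 t2 t3) 3 = u_t t0 t1 t2 t3 * t3].
  by split; rewrite /= /u_t; ring.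
by rewrite /rho_q r0 r1 r2 r3; case: i => [|[|i]] /=; ring.
Qed.

Lemma sigma4_tau_t (t0 t1 t2 t3 : R) : sigma4_q (tau_t t0 t1 t2 t3) = 0.
Proof. rewrite /sigma4_q /=; ring. Qed.

Lemma sigma2_tau_t (t0 t1 t2 t3 : R) :
  sigma2_q (tau_t t0 t1 t2 t3) =
  t0 * t1 * t2 * t3 * (t0 + t1 + t2 + t3) *
  ((t0 + t1 + t2 + t3) * (t0 * t1 + t0 * t2 + t0 * t3 + t1 * t2 + t1 * t3 + t2 * t3)
   - (t0 * t1 * t2 + t0 * t1 * t3 + t0 * t2 * t3 + t1 * t2 * t3)).
Proof. rewrite /sigma2_q /=; ring. Qed.

Lemma t_xyz_relation (x y z : R) :
  let t0 := t_xyz x y z 0 in let t1 := t_xyz x y z 1 in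
  let t2 := t_xyz x y z 2 in let t3 := t_xyz x y z 3 in
  (t0 + t1 + t2 + t3) * (t0 * t1 + t0 * t2 + t0 * t3 + t1 * t2 + t1 * t3 + t2 * t3)
  = t0 * t1 * t2 + t0 * t1 * t3 + t0 * t2 * t3 + t1 * t2 * t3.
Proof. rewrite /=; ring. Qed.

Lemma rho_t_xyz (x y z : R) (i : nat) :
  rho_t (t_xyz x y z 0) (t_xyz x y z 1) (t_xyz x y z 2) (t_xyz x y z 3) i
  = g_xyz x y z * (match i with 0 => x | 1 => y | _ => z end).
Proof. by rewrite /g_xyz; case: i => [|[|i]] /=; ring. Qed.

Lemma rho_tau_xyz (x y z : R) (i : nat) :
  rho_q (tau_xyz x y z) i
  = lambda_xyz x y z * (match i with 0 => x | 1 => y | _ => z end).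
Proof. by rewrite rho_tau_t rho_t_xyz mulrA. Qed.

Lemma sigma2_tau_xyz (x y z : R) : sigma2_q (tau_xyz x y z) = 0.
Proof. by rewrite sigma2_tau_t t_xyz_relation subrr mulr0. Qed.

Lemma sigma4_tau_xyz (x y z : R) : sigma4_q (tau_xyz x y z) = 0.
Proof. exact: sigma4_tau_t. Qed.

Lemma lambda_xyz_tau4 (x y z : R) : tau_xyz x y z 4 = 0 -> lambda_xyz x y z = 0.
Proof. by rewrite /lambda_xyz /u_t => /= ->; rewrite expr0n /= !mulr0 oppr0 expr0n mul0r. Qed.

Lemma t_xyz_homog (c x y z : R) (j : nat) :
  t_xyz (c * x) (c * y) (c * z) j = c ^+ 3 * t_xyz x y z j.
Proof. by case: j => [|[|[|j]]] /=; ring. Qed.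

Lemma tau_xyz_homog (c x y z : R) (i : nat) :
  tau_xyz (c * x) (c * y) (c * z) i = c ^+ 12 * tau_xyz x y z i.
Proof. by rewrite /tau_xyz !t_xyz_homog; case: i => [|[|[|[|i]]]] /=; ring. Qed.

Lemma lambda_xyz_homog (c x y z : R) :
  lambda_xyz (c * x) (c * y) (c * z) = c ^+ 95 * lambda_xyz x y z.
Proof. rewrite /lambda_xyz /u_t /g_xyz !t_xyz_homog; ring. Qed.

Lemma rho_q_homog (c : R) (q : nat -> R) (i : nat) :
  rho_q (fun j => c * q j) i = c ^+ 8 * rho_q q i.
Proof. by case: i => [|[|i]] /=; ring. Qed.

Lemma sigma2_q_homog (c : R) (q : nat -> R) :
  sigma2_q (fun j => c * q j) = c ^+ 2 * sigma2_q q.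
Proof. rewrite /sigma2_q; ring. Qed.

Lemma sigma4_q_homog (c : R) (q : nat -> R) :
  sigma4_q (fun j => c * q j) = c ^+ 4 * sigma4_q q.
Proof. rewrite /sigma4_q; ring. Qed.

End Formulas.

Section Rmorphisms.
Variables (R S : comPzRingType) (f : {rmorphism R -> S}).

Local Ltac push_rmorph :=
  rewrite ?(rmorphM, rmorphD, rmorphB, rmorphN, rmorphXn, rmorph_nat, rmorph1).

Lemma t_xyz_rmorph (x y z : R) (j : nat) : f (t_xyz x y z j) = t_xyz (f x) (f y) (f z) j.
Proof. by case: j => [|[|[|j]]] /=; push_rmorph. Qed.

Lemma tau_t_rmorph (t0 t1 t2 t3 : R) (i : nat) :
  f (tau_t t0 t1 t2 t3 i) = tau_t (f t0) (f t1) (f t2) (f t3) i.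
Proof. by case: i => [|[|[|[|i]]]] /=; push_rmorph. Qed.

Lemma u_t_rmorph (t0 t1 t2 t3 : R) : f (u_t t0 t1 t2 t3) = u_t (f t0) (f t1) (f t2) (f t3).
Proof. by rewrite /u_t; push_rmorph. Qed.

Lemma g_xyz_rmorph (x y z : R) : f (g_xyz x y z) = g_xyz (f x) (f y) (f z).
Proof. by rewrite /g_xyz; push_rmorph. Qed.

Lemma tau_xyz_rmorph (x y z : R) (i : nat) :
  f (tau_xyz x y z i) = tau_xyz (f x) (f y) (f z) i.
Proof. by rewrite /tau_xyz tau_t_rmorph !t_xyz_rmorph. Qed.

Lemma lambda_xyz_rmorph (x y z : R) : f (lambda_xyz x y z) = lambda_xyz (f x) (f y) (f z).
Proof. by rewrite /lambda_xyz rmorphM rmorphXn u_t_rmorph g_xyz_rmorph !t_xyz_rmorph. Qed.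

End Rmorphisms.

Lemma tpolE (j : nat) : tpol j = t_xyz px py pz j.
Proof. by case: j => [|[|[|j]]]. Qed.

Lemma taupolE (i : 'I_5) : taupol i = tau_xyz px py pz i.
Proof.
rewrite /taupol /tau_xyz -!tpolE.
by case: i => [[|[|[|[|[|//]]]]] lt_i5];
  rewrite /= ?big_mkcond !big_ord_recl !big_ord0 /=; ring.
Qed.

Section RhopolRmorph.
Variables (S : comPzRingType) (f : {rmorphism {mpoly int[5]} -> S}) (v : nat -> S).
Hypothesis fX : forall j : 'I_5, f 'X_j = v j.

Lemma rpol_rmorph (i : nat) : (i < 5)%N -> f (rpol i) = r_q v i.
Proof.
move=> lt_i5; rewrite /rpol rmorph_prod big_mkcond !big_ord_recl big_ord0 /= !fX.
by case: i lt_i5 => [|[|[|[|[|//]]]]] _ /=; ring.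
Qed.

Lemma rhopol_rmorph (i : 'I_3) : f (rhopol i) = rho_q v i.
Proof.
by case: i => [[|[|[|//]]] lt_i3]; rewrite /rhopol /=;
  rewrite ?(rmorphM, rmorphN, rmorphD) !rpol_rmorph.
Qed.

End RhopolRmorph.

Lemma rho0_tauE : rho0_tau = lambda_xyz px py pz * px.
Proof.
rewrite /rho0_tau (rhopol_rmorph (v := tau_xyz px py pz)) ?rho_tau_xyz // => j.
by rewrite /= comp_mpolyXU -tnth_nth tnth_mktuple taupolE.
Qed.

Lemma divX0_mulX (Q : {mpoly int[3]}) : divX0 (Q * px) = Q.
Proof.
rewrite /divX0 (perm_big _ (msuppMX Q _)) big_map [RHS]mpolyE /=.
rewrite (eq_bigl predT); last by move=> m; rewrite mnmDE mnm1E eqxx.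
by apply: eq_bigr => m _; rewrite mcoeffMX addmC addmK.
Qed.

Lemma lampolE : lampol = lambda_xyz px py pz.
Proof. by rewrite /lampol rho0_tauE divX0_mulX. Qed.

Section Evaluation.
Variable K : fieldType.

Definition evr n (v : 'I_n -> K) : {rmorphism {mpoly int[n]} -> K} :=
  (meval v \o map_mpoly (fun c : int => c%:~R))%FUN.

Lemma evE n (P : {mpoly int[n]}) (v : 'I_n -> K) : ev P v = evr v P.
Proof. by []. Qed.

Lemma ev_X n (i : 'I_n) (v : 'I_n -> K) : ev 'X_i v = v i.
Proof. by rewrite /ev map_mpolyX mevalXU. Qed.

Lemma eq_ev n (P : {mpoly int[n]}) (v1 v2 : 'I_n -> K) : v1 =1 v2 -> ev P v1 = ev P v2.
Proof. by move=> eq_v; rewrite /ev (meval_eq _ eq_v). Qed.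

Lemma ev_mwiden n (P : {mpoly int[n]}) (v : 'I_n.+1 -> K) :
  ev (mwiden P) v = ev P (fun i => v (widen_ord (leqnSn n) i)).
Proof.
rewrite [in LHS](mpolyE P) [in RHS](mpolyE P) raddf_sum !evE !raddf_sum.
apply: eq_bigr => m _ /=; rewrite mwidenZ mwidenX -!mul_mpolyC !rmorphM /=.
rewrite !map_mpolyC !map_mpolyX !mevalC !mevalX big_ord_recr /=.
rewrite mnmwiden_ordmax expr0 mulr1; congr (_ * _).
by apply: eq_bigr => i _; rewrite mnmwiden_widen.
Qed.

Lemma ev_mesymSS n k (w : nat -> K) :
  ev (mesym n.+1 int k.+1) (fun i => w i) =
  ev (mesym n int k.+1) (fun i => w i) + ev (mesym n int k) (fun i => w i) * w n.
Proof. by rewrite mesymSS !evE rmorphD rmorphM -!evE !ev_mwiden ev_X. Qed.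

Lemma ev_mesym0 n (w : nat -> K) : ev (mesym n int 0) (fun i => w i) = 1.
Proof. by rewrite mesym0E evE rmorph1. Qed.

Lemma ev_mesym_0S k (w : nat -> K) : ev (mesym 0 int k.+1) (fun i => w i) = 0.
Proof. by rewrite mesym_geqnE // evE rmorph0. Qed.

Lemma ev_sigmapol2 (q : 'I_5 -> K) (w : nat -> K) :
  (forall j : 'I_5, q j = w j) -> ev (sigmapol 2) q = sigma2_q w.
Proof.
move=> q_w; rewrite (eq_ev _ q_w) /sigmapol !ev_mesymSS !ev_mesym0 !ev_mesym_0S.
by rewrite /sigma2_q; ring.
Qed.

Lemma ev_sigmapol4 (q : 'I_5 -> K) (w : nat -> K) :
  (forall j : 'I_5, q j = w j) -> ev (sigmapol 4) q = sigma4_q w.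
Proof.
move=> q_w; rewrite (eq_ev _ q_w) /sigmapol !ev_mesymSS !ev_mesym0 !ev_mesym_0S.
by rewrite /sigma4_q; ring.
Qed.

Lemma rho_map_rho_q (q : 'I_5 -> K) (w : nat -> K) :
  (forall j : 'I_5, q j = w j) -> forall i, rho_map q i = rho_q w i.
Proof.
move=> q_w i; rewrite /rho_map evE (rhopol_rmorph (v := w)) // => j.
by rewrite -evE ev_X.
Qed.

Lemma tau_mapE (p : 'I_3 -> K) (i : 'I_5) : tau_map p i = tau_xyz (p 0) (p 1) (p 2) i.
Proof. by rewrite /tau_map taupolE evE tau_xyz_rmorph -!evE !ev_X. Qed.

Lemma ev_lampol (p : 'I_3 -> K) : ev lampol p = lambda_xyz (p 0) (p 1) (p 2).
Proof. by rewrite lampolE evE lambda_xyz_rmorph -!evE !ev_X. Qed.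

Lemma rho_tau_map (p : 'I_3 -> K) (i : 'I_3) : rho_map (tau_map p) i = ev lampol p * p i.
Proof.
rewrite (rho_map_rho_q (tau_mapE p)) rho_tau_xyz ev_lampol.
by case: i => [[|[|[|//]]] lt_i3]; congr (_ * p _); apply: val_inj.
Qed.

Lemma tau_map_in_Mbar (p : 'I_3 -> K) : ev lampol p != 0 -> in_Mbar (tau_map p).
Proof.
move=> lam_p; have tau_p := tau_mapE p.
split; last by rewrite (ev_sigmapol2 tau_p) (ev_sigmapol4 tau_p) sigma2_tau_xyz sigma4_tau_xyz.
exists (inord 4); rewrite tau_p inordK //; apply: contra lam_p.
by rewrite ev_lampol => /eqP /lambda_xyz_tau4 ->.
Qed.

Lemma tau_mapZ (p : 'I_3 -> K) (c : K) (i : 'I_5) :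
  tau_map (fun j => c * p j) i = c ^+ 12 * tau_map p i.
Proof. by rewrite !tau_mapE tau_xyz_homog. Qed.

Lemma lampolZ (p : 'I_3 -> K) (c : K) :
  ev lampol (fun j => c * p j) = c ^+ 95 * ev lampol p.
Proof. by rewrite !ev_lampol lambda_xyz_homog. Qed.

Lemma rho_mapZ (q : 'I_5 -> K) (c : K) (i : 'I_3) :
  rho_map (fun j => c * q j) i = c ^+ 8 * rho_map q i.
Proof.
rewrite (@rho_map_rho_q q (fun j => q (inord j))) => [|j]; last by rewrite inord_val.
by rewrite -rho_q_homog; apply: rho_map_rho_q => j /=; rewrite inord_val.
Qed.

Lemma nonzero_vec_proj_eq n (v w : 'I_n -> K) :
  proj_eq v w -> nonzero_vec v -> nonzero_vec w.
Proof. by move=> [c [c0 w_cv]] [i vi]; exists i; rewrite w_cv mulf_neq0. Qed.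

Lemma in_Mbar_proj_eq (v w : 'I_5 -> K) : proj_eq v w -> in_Mbar v -> in_Mbar w.
Proof.
move=> vw [v0 [s2v s4v]]; split; first exact: nonzero_vec_proj_eq vw v0.
case: vw => c [_ w_cv]; pose v' j := v (inord j).
have v_v' (j : 'I_5) : v j = v' j by rewrite /v' inord_val.
have w_cv' (j : 'I_5) : w j = c * v' j by rewrite w_cv v_v'.
rewrite (ev_sigmapol2 (w := fun j => c * v' j) w_cv').
rewrite (ev_sigmapol4 (w := fun j => c * v' j) w_cv') sigma2_q_homog sigma4_q_homog.
by rewrite -(ev_sigmapol2 v_v') -(ev_sigmapol4 v_v') s2v s4v !mulr0.
Qed.

Lemma rho_map_tau_multiple (p : 'I_3 -> K) (c : K) (q : 'I_5 -> K) :
  (forall i, q i = c * tau_map p i) ->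
  forall i, rho_map q i = c ^+ 8 * ev lampol p * p i.
Proof.
move=> q_ctau i; rewrite /rho_map (eq_ev _ q_ctau) -/(rho_map _ i).
by rewrite rho_mapZ rho_tau_map mulrA.
Qed.

End Evaluation.

Section OpenSets.
Variable K : fieldType.

Lemma Utau_in_Mbar (p : 'I_3 -> K) : in_Utau p -> notin_Ttau p /\ in_Mbar (tau_map p).
Proof. by move=> [_ /tau_map_in_Mbar Mtau]; split; first case: Mtau. Qed.

Lemma Urho_in_Mbar_minus_Trho (q : 'I_5 -> K) : in_Urho q -> in_Mbar_minus_Trho q.
Proof.
move=> [p [[[j pj] lam_p] tau_q]]; split.
  exact: in_Mbar_proj_eq tau_q (tau_map_in_Mbar lam_p).
case: tau_q => c [c0 q_ctau]; exists j.
by rewrite (rho_map_tau_multiple q_ctau) !mulf_neq0 ?expf_neq0.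
Qed.

Lemma rho_map_Urho_in_Utau (q : 'I_5 -> K) : in_Urho q -> in_Utau (rho_map q).
Proof.
move=> [p [[[j pj] lam_p] [c [c0 q_ctau]]]].
have d0 : c ^+ 8 * ev lampol p != 0 by rewrite mulf_neq0 ?expf_neq0.
split; first by exists j; rewrite (rho_map_tau_multiple q_ctau) mulf_neq0.
by rewrite (eq_ev _ (rho_map_tau_multiple q_ctau)) lampolZ mulf_neq0 ?expf_neq0.
Qed.

Lemma rho_tau_map_proj_eq (p : 'I_3 -> K) : in_Utau p -> proj_eq p (rho_map (tau_map p)).
Proof. by move=> [_ lam_p]; exists (ev lampol p); split=> // i; exact: rho_tau_map. Qed.

Lemma tau_rho_map_proj_eq (q : 'I_5 -> K) : in_Urho q -> proj_eq q (tau_map (rho_map q)).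
Proof.
move=> [p [[_ lam_p] [c [c0 q_ctau]]]]; set d := c ^+ 8 * ev lampol p.
have d0 : d != 0 by rewrite mulf_neq0 ?expf_neq0.
exists (d ^+ 12 / c); split=> [|i]; first by rewrite mulf_neq0 ?expf_neq0 ?invr_eq0.
rewrite /tau_map (eq_ev _ (rho_map_tau_multiple q_ctau)) -/(tau_map _ i) tau_mapZ.
by rewrite q_ctau mulrA divfK.
Qed.

End OpenSets.

Theorem lemma8p5 :
  forall (K : fieldType), [pchar K] =i pred0 ->
    (* tau is defined on U_tau and lands in Mbar (hence tau : U_tau -> U_rho) *)
    (forall p : 'I_3 -> K, in_Utau p -> notin_Ttau p /\ in_Mbar (tau_map p)) /\
    (* U_rho is contained in Mbar \ T_rho *)
    (forall q : 'I_5 -> K, in_Urho q -> in_Mbar_minus_Trho q) /\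
    (* rho maps U_rho into U_tau *)
    (forall q : 'I_5 -> K, in_Urho q -> in_Utau (rho_map q)) /\
    (* rho o tau = id on U_tau *)
    (forall p : 'I_3 -> K, in_Utau p -> proj_eq p (rho_map (tau_map p))) /\
    (* tau o rho = id on U_rho *)
    (forall q : 'I_5 -> K, in_Urho q -> proj_eq q (tau_map (rho_map q))).
Proof.
move=> K _; split; first exact: Utau_in_Mbar.
split; first exact: Urho_in_Mbar_minus_Trho.
split; first exact: rho_map_Urho_in_Utau.
split; first exact: rho_tau_map_proj_eq.
exact: tau_rho_map_proj_eq.
Qed.
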